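(* Under assumptions (A1)–(A6) below, for (almost) every $x$ in the support of $X$, $$\psi(x) = \Big[1-\frac{\mu_{10}(x)}{\mu_{11}(x)}\Big]\Big[1-\frac{\gamma_0(x)}{\gamma_1(x)}\Big],$$ $$\delta(x) = \Big[1-\frac{\mu_{00}(x)}{\mu_{11}(x)}\Big]\Big[1-\frac{\gamma_0(x)}{\gamma_1(x)}\Big] + \Big[1-\frac{\mu_{01}(x)}{\mu_{11}(x)}\Big]\frac{\gamma_0(x)}{\gamma_1(x)},$$ and $\zeta(x)=\delta(x)-\psi(x)$.
   Context: Observed data $O=(X,A,M,Y)$ with covariates $X\in\mathbb{R}^d$, binary exposure $A$, binary mediator $M$, binary outcome $Y$. For $a,m\in\{0,1\}$, $Y(a,m)$ denotes the potential outcome under $A=a,M=m$, $M(a)$ the potential mediator under $A=a$, and $Y(a):=Y(a,M(a))$; cross-world quantities $Y(a,M(a'))$ are defined by substitution. All are defined on a common probability space with $O$. Let $\mu_{am}(x)=P(Y=1\mid A=a,M=m,X=x)$ and $\gamma_a(x)=P(M=1\mid A=a,X=x)$. Estimands: $\delta(x)=P(Y(0)=0\mid Y(1)=1,M(1)=1,X=x)$ (total mediated probability of causation); $\psi(x)=P(Y(1,M(0))=0,\,Y(0,M(0))=0\mid Y(1,M(1))=1,M(1)=1,X=x)$ (probability of indirect causation); $\zeta(x)=P(Y(1,M(0))=1,\,Y(0,M(0))=0\mid Y(1,M(1))=1,M(1)=1,X=x)$ (probability of direct causation). Assumptions: (A1) consistency: for all $a,m$, $A=a,M=m\Rightarrow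 Y=Y(a,m)$ and $A=a\Rightarrow M=M(a)$. (A2) monotonicity: $Y(1,1)\ge Y(1,0)\ge Y(0,0)$, $Y(1,1)\ge Y(0,1)$, $M(1)\ge M(0)$. (A3) $A\perp\{Y(1,1),Y(1,0),Y(0,1),Y(0,0),M(1),M(0)\}\mid X$. (A4) cross-world ignorability: $\{Y(1,1),Y(1,0),Y(0,1),Y(0,0)\}\perp\{M(1),M(0)\}\mid X$. (A5) there is $\epsilon>0$ with $P\{\min_{a,m}P(A=a,M=m\mid X)\ge\epsilon\}=1$. (A6) $P\{P(Y=1\mid A=1,M=1,X)\ge\epsilon\}=1$. *)

From HB Require Import structures.
From mathcomp Require Import all_boot all_order all_algebra.
From mathcomp Require Import all_classical all_reals all_analysis.
Set Implicit Arguments. Unset Strict Implicit. Unset Printing Implicit Defensive.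
Import Order.TTheory GRing.Theory Num.Theory.
Local Open Scope ring_scope.

(* A configuration of all the binary variables of one unit:
   (A, M, Y, (M(0), M(1)), ((Y(0,0), Y(0,1)), (Y(1,0), Y(1,1)))). *)
Definition potT := ((bool * bool) * ((bool * bool) * (bool * bool)))%type.
Definition cfgT := (bool * bool * bool * potT)%type.

Definition cA (u : cfgT) : bool := u.1.1.1.
Definition cM (u : cfgT) : bool := u.1.1.2.
Definition cY (u : cfgT) : bool := u.1.2.
Definition cPot (u : cfgT) : potT := u.2.
Definition cMpot (u : cfgT) : bool * bool := u.2.1.
Definition cYpot (u : cfgT) : (bool * bool) * (bool * bool) := u.2.2.
Definition cMp (u : cfgT) (a : bool) : bool :=
  if a then u.2.1.2 else u.2.1.1.
Definition cYp (u : cfgT) (a m : bool) : bool :=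
  if a then (if m then u.2.2.2.2 else u.2.2.2.1)
       else (if m then u.2.2.1.2 else u.2.2.1.1).

Definition mkcfg {Omega : Type} (A M Y : Omega -> bool) (Mp : bool -> Omega -> bool)
  (Yp : bool -> bool -> Omega -> bool) (w : Omega) : cfgT :=
  (A w, M w, Y w,
   ((Mp false w, Mp true w),
    ((Yp false false w, Yp false true w), (Yp true false w, Yp true true w)))).

Section KernelProb.
Variable R : realType.
(* k : a (conditional) probability mass function on configurations,
   here the conditional law given X = x. *)
Variable k : cfgT -> R.

Definition Kp (E : pred cfgT) : R := \sum_(u : cfgT | E u) k u.
Definition Kc (E F : pred cfgT) : R := Kp (fun u => E u && F u) / Kp F.

Definition mu (a m : bool) : R := Kc cY (fun u => (cA u == a) && (cM u == m)).
Definition gamma (a : bool) : R := Kc cM (fun u => cA u == a).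

Definition condE (u : cfgT) : bool := cYp u true (cMp u true) && cMp u true.

(* delta(x) = P(Y(0)=0 | Y(1)=1, M(1)=1, X=x), Y(a) = Y(a,M(a)) *)
Definition delta : R := Kc (fun u => ~~ cYp u false (cMp u false)) condE.
Definition psi : R :=
  Kc (fun u => ~~ cYp u true (cMp u false) && ~~ cYp u false (cMp u false)) condE.
Definition zeta : R :=
  Kc (fun u => cYp u true (cMp u false) && ~~ cYp u false (cMp u false)) condE.

Definition indep_A_pot : Prop :=
  forall (a : bool) (w : potT),
    Kp (fun u => (cA u == a) && (cPot u == w)) =
    Kp (fun u => cA u == a) * Kp (fun u => cPot u == w).
Definition indep_Y_M : Prop :=
  forall y m,
    Kp (fun u => (cYpot u == y) && (cMpot u == m)) =
    Kp (fun u => cYpot u == y) * Kp (fun u => cMpot u == m).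
End KernelProb.

(* Consistency and monotonicity hold for every unit, so for almost every w the
   conditional law K (X w) charges only configurations satisfying them.  There,
   the event {A = a, M = m} is {A = a, M(a) = m} and
   {Y = 1, A = a, M = m} is {A = a, Y(a,m) = 1, M(a) = m}; the two independence
   assumptions then factor their conditional probabilities, so that
   mu_am = P(Y(a,m) = 1 | x) and gamma_a = P(M(a) = 1 | x).  Monotonicity turns
   the events defining delta and psi into products of events of the form
   {Y(a,m) = 1, Y(a',m') = 0} and {M(1) = 1, M(0) = 0}, whose probabilities are
   differences of these marginals, and zeta + psi = delta because the events of
   zeta and psi split the event of delta according to Y(1,M(0)). *)
From HB Require Import structures.
From mathcomp Require Import all_boot all_order all_algebra.
From mathcomp Require Import all_classical all_reals all_analysis.
From mathcomp Require Import measurable_realfun.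
From mathcomp Require Import ring.
Set Implicit Arguments. Unset Strict Implicit. Unset Printing Implicit Defensive.
Import Order.TTheory GRing.Theory Num.Theory.
Local Open Scope ring_scope.

Definition admissible (u : cfgT) : bool :=
  [&& cY u == cYp u (cA u) (cM u), cM u == cMp u (cA u),
      cYp u true false ==> cYp u true true, cYp u false false ==> cYp u true false,
      cYp u false true ==> cYp u true true & cMp u false ==> cMp u true].

Lemma mkcfg_admissible (Omega : Type) (A M Y : Omega -> bool)
    (Mp : bool -> Omega -> bool) (Yp : bool -> bool -> Omega -> bool) :
  (forall w a m, A w = a -> M w = m -> Y w = Yp a m w) ->
  (forall w a, A w = a -> M w = Mp a w) ->
  (forall w, [/\ Yp true false w ==> Yp true true w,
                 Yp false false w ==> Yp true false w,
                 Yp false true w ==> Yp true true w &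
                 Mp false w ==> Mp true w]) ->
  forall w, admissible (mkcfg A M Y Mp Yp w).
Proof.
move=> consY consM mono w; have [h1 h2 h3 h4] := mono w.
rewrite /admissible /mkcfg /cY /cA /cM /cYp /cMp /= h1 h2 h3 h4 !andbT.
rewrite (consY w (A w) (M w) erefl erefl).
by move: (consM w _ erefl); case: (A w); case: (M w) => /= <-; rewrite !eqxx.
Qed.

(* [cYp u a m] and [cMp u a] are convertible to [Yat (cYpot u) a m] and
   [Mat (cMpot u) a], which exhibits them as functions of the two components
   that (A4) makes independent. *)
Definition Yat (yy : (bool * bool) * (bool * bool)) (a m : bool) : bool :=
  if a then (if m then yy.2.2 else yy.2.1) else (if m then yy.1.2 else yy.1.1).
Definition Mat (mm : bool * bool) (a : bool) : bool := if a then mm.2 else mm.1.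

Ltac case_cfg :=
  move=> [[[[] []] []] [[[] []] [[[] []] [[] []]]]]; rewrite /admissible /=.

Section KpLaws.
Variables (R : realType) (k : cfgT -> R).

Lemma Kp_split (E F : pred cfgT) :
  Kp k E = Kp k (fun u => E u && F u) + Kp k (fun u => E u && ~~ F u).
Proof. by rewrite /Kp (bigID F). Qed.

Lemma Kc_split (E F G : pred cfgT) :
  Kc k E F = Kc k (fun u => G u && E u) F + Kc k (fun u => ~~ G u && E u) F.
Proof.
rewrite /Kc -mulrDl; congr (_ / _); rewrite (Kp_split _ G); congr (_ + _);
  by apply: eq_bigl => u; case: (G u) (E u) (F u) => [] [] [].
Qed.

Lemma Kp_comp (J : finType) (f : cfgT -> J) (S : pred J) (E : pred cfgT) :
  Kp k (fun u => S (f u) && E u) = \sum_(j | S j) Kp k (fun u => (f u == j) && E u).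
Proof.
rewrite /Kp (partition_big f S) => [|u /andP[]//].
apply: eq_bigr => j Sj; apply: eq_bigl => u.
by case: (f u =P j) => [->|_]; rewrite ?Sj ?andbF ?andbT.
Qed.

Lemma Kp_comp1 (J : finType) (f : cfgT -> J) (S : pred J) :
  Kp k (fun u => S (f u)) = \sum_(j | S j) Kp k (fun u => f u == j).
Proof.
transitivity (Kp k (fun u => S (f u) && true)); first by apply: eq_bigl => u; rewrite andbT.
by rewrite Kp_comp; apply: eq_bigr => j _; apply: eq_bigl => u; rewrite andbT.
Qed.

Lemma Kp_indep (J1 J2 : finType) (f : cfgT -> J1) (g : cfgT -> J2) :
  (forall j1 j2, Kp k (fun u => (f u == j1) && (g u == j2)) =
                 Kp k (fun u => f u == j1) * Kp k (fun u => g u == j2)) ->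
  forall (S1 : pred J1) (S2 : pred J2),
  Kp k (fun u => S1 (f u) && S2 (g u)) =
  Kp k (fun u => S1 (f u)) * Kp k (fun u => S2 (g u)).
Proof.
move=> fg S1 S2; rewrite !Kp_comp1 mulr_suml Kp_comp; apply: eq_bigr => j1 _.
transitivity (Kp k (fun u => S2 (g u) && (f u == j1)));
  first by apply: eq_bigl => u; rewrite andbC.
rewrite Kp_comp mulr_sumr.
by apply: eq_bigr => j2 _; rewrite -fg; apply: eq_bigl => u; rewrite andbC.
Qed.

End KpLaws.

Section Identification.
Variables (R : realType) (k : cfgT -> R).
Hypothesis k_admissible : forall u, ~~ admissible u -> k u = 0.
Hypothesis k_indepA : indep_A_pot k.
Hypothesis k_indepYM : indep_Y_M k.
Hypothesis k_AM_gt0 : forall a m, 0 < Kp k (fun u => (cA u == a) && (cM u == m)).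
Hypothesis mu11_gt0 : 0 < mu k true true.

Lemma Kp_eq_admissible (E F : pred cfgT) :
  (forall u, admissible u -> E u = F u) -> Kp k E = Kp k F.
Proof.
move=> EF; rewrite /Kp (bigID admissible) [RHS](bigID admissible) /=.
rewrite [X in _ + X]big1 => [|u /andP[_ /k_admissible]//].
rewrite [X in _ = _ + X]big1 => [|u /andP[_ /k_admissible]//].
by congr (_ + _); apply: eq_bigl => u; case: (boolP (admissible u)) => [/EF->|];
   rewrite ?andbT ?andbF.
Qed.

Lemma Kp_indepA (a : bool) (S : pred potT) :
  Kp k (fun u => (cA u == a) && S (cPot u)) =
  Kp k (fun u => cA u == a) * Kp k (fun u => S (cPot u)).
Proof. exact: (@Kp_indep R k _ _ cA cPot k_indepA (pred1 a) S). Qed.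

Lemma Kp_indepYM (SY : pred ((bool * bool) * (bool * bool))) (SM : pred (bool * bool)) :
  Kp k (fun u => SY (cYpot u) && SM (cMpot u)) =
  Kp k (fun u => SY (cYpot u)) * Kp k (fun u => SM (cMpot u)).
Proof. exact: (@Kp_indep R k _ _ cYpot cMpot k_indepYM SY SM). Qed.

Definition pA (a : bool) : R := Kp k (fun u => cA u == a).
Definition pY (a m : bool) : R := Kp k (fun u => cYp u a m).
Definition pM (a : bool) : R := Kp k (fun u => cMp u a).

Lemma Kp_AM a m :
  Kp k (fun u => (cA u == a) && (cM u == m)) = pA a * Kp k (fun u => cMp u a == m).
Proof.
rewrite -(Kp_indepA a (fun w => Mat w.1 a == m)).
by apply: Kp_eq_admissible; move: a m => [] []; case_cfg.
Qed.

Lemma Kp_YAM a m :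
  Kp k (fun u => cY u && ((cA u == a) && (cM u == m))) =
  pA a * (pY a m * Kp k (fun u => cMp u a == m)).
Proof.
rewrite /pY -(Kp_indepYM (fun yy => Yat yy a m) (fun mm => Mat mm a == m)).
rewrite -(Kp_indepA a (fun w => Yat w.2 a m && (Mat w.1 a == m))).
by apply: Kp_eq_admissible; move: a m => [] []; case_cfg.
Qed.

Lemma pA_neq0 a : pA a != 0.
Proof.
by have := k_AM_gt0 a true; rewrite Kp_AM; apply: contraTneq => ->; rewrite mul0r ltxx.
Qed.

Lemma Kp_cMp_true a : Kp k (fun u => cMp u a == true) = pM a.
Proof. by apply: eq_bigl => u; rewrite eqb_id. Qed.

Lemma pM1_neq0 : pM true != 0.
Proof.
have := k_AM_gt0 true true; rewrite Kp_AM Kp_cMp_true.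
by apply: contraTneq => ->; rewrite mulr0 ltxx.
Qed.

Lemma mu_identified a m : mu k a m = pY a m.
Proof.
have := k_AM_gt0 a m; rewrite Kp_AM => AM_gt0.
by rewrite /mu /Kc Kp_YAM Kp_AM mulrCA mulfK // gt_eqF.
Qed.

Lemma gamma_identified a : gamma k a = pM a.
Proof.
rewrite /gamma /Kc.
have -> : Kp k (fun u => cM u && (cA u == a)) =
          Kp k (fun u => (cA u == a) && (cM u == true)).
  by apply: eq_bigl => u; rewrite eqb_id andbC.
by rewrite Kp_AM Kp_cMp_true [pA a * _]mulrC mulfK // pA_neq0.
Qed.

Lemma Kp_condE : Kp k condE = pY true true * pM true.
Proof.
rewrite /pY /pM -(Kp_indepYM (fun yy => Yat yy true true) (fun mm => Mat mm true)).
by apply: eq_bigl => -[x [[m0 []] yy]]; rewrite /condE /= ?andbF.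
Qed.

Lemma Kp_Y_gap a m a' m' :
  (forall u, admissible u -> cYp u a' m' ==> cYp u a m) ->
  Kp k (fun u => cYp u a m && ~~ cYp u a' m') = pY a m - pY a' m'.
Proof.
move=> mono; rewrite /pY (Kp_split k (fun u => cYp u a m) (fun u => cYp u a' m')).
have -> : Kp k (fun u => cYp u a m && cYp u a' m') = Kp k (fun u => cYp u a' m').
  apply: Kp_eq_admissible => u /mono.
  by case: (cYp u a' m') => /= [->|_]; rewrite ?andbF.
by rewrite addrAC subrr add0r.
Qed.

Lemma Kp_M_gap : Kp k (fun u => cMp u true && ~~ cMp u false) = pM true - pM false.
Proof.
rewrite /pM (Kp_split k (fun u => cMp u true) (fun u => cMp u false)).
have -> : Kp k (fun u => cMp u true && cMp u false) = Kp k (fun u => cMp u false).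
  by apply: Kp_eq_admissible; case_cfg.
by rewrite addrAC subrr add0r.
Qed.

(* On the conditioning event Y(0,M(0)) = 0 reads Y(0,1) = 0 when M(0) = 1,
   and Y(0,0) = 0 when M(0) = 0 < M(1). *)
Lemma Kp_delta_event :
  Kp k (fun u => ~~ cYp u false (cMp u false) && condE u) =
  (pY true true - pY false true) * pM false +
  (pY true true - pY false false) * (pM true - pM false).
Proof.
rewrite (Kp_split k _ (fun u => cMp u false)); congr (_ + _).
  rewrite -Kp_Y_gap; last by case_cfg.
  rewrite -(Kp_indepYM (fun yy => Yat yy true true && ~~ Yat yy false true)
                       (fun mm => Mat mm false)).
  by apply: Kp_eq_admissible; case_cfg.
rewrite -Kp_M_gap -Kp_Y_gap; last by case_cfg.
rewrite -(Kp_indepYM (fun yy => Yat yy true true && ~~ Yat yy false false)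
                     (fun mm => Mat mm true && ~~ Mat mm false)).
by apply: Kp_eq_admissible; case_cfg.
Qed.

(* Y(1,M(0)) = 0 and Y(1,M(1)) = 1 force M(0) = 0 < M(1); then Y(1,0) = 0
   already implies Y(0,0) = 0 by monotonicity. *)
Lemma Kp_psi_event :
  Kp k (fun u => (~~ cYp u true (cMp u false) && ~~ cYp u false (cMp u false)) && condE u) =
  (pY true true - pY true false) * (pM true - pM false).
Proof.
rewrite -Kp_M_gap -Kp_Y_gap; last by case_cfg.
rewrite -(Kp_indepYM (fun yy => Yat yy true true && ~~ Yat yy true false)
                     (fun mm => Mat mm true && ~~ Mat mm false)).
by apply: Kp_eq_admissible; case_cfg.
Qed.

Lemma causation_probabilities_identified :
  [/\ psi k = (1 - mu k true false / mu k true true) *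
              (1 - gamma k false / gamma k true),
      delta k = (1 - mu k false false / mu k true true) *
                (1 - gamma k false / gamma k true)
                + (1 - mu k false true / mu k true true) *
                  (gamma k false / gamma k true) &
      zeta k = delta k - psi k].
Proof.
have pY11_neq0 : pY true true != 0 by rewrite -mu_identified gt_eqF.
split.
- rewrite !mu_identified !gamma_identified /psi /Kc Kp_condE Kp_psi_event.
  by field; rewrite pY11_neq0 pM1_neq0.
- rewrite !mu_identified !gamma_identified /delta /Kc Kp_condE Kp_delta_event.
  by field; rewrite pY11_neq0 pM1_neq0.
- by rewrite /delta (Kc_split k _ _ (fun u => cYp u true (cMp u false))) addrK.
Qed.

End Identification.

Local Open Scope classical_set_scope.

Section KernelSupport.
Variables (R : realType) (dO : measure_display) (Omega : measurableType dO).
Variables (P : probability Omega R) (dX : measure_display) (T : measurableType dX).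
Variables (J : finType) (X : Omega -> T) (C : Omega -> J) (K : T -> J -> R).
Hypothesis mX : measurable_fun setT X.
Hypothesis K_ge0 : forall x u, 0 <= K x u.
Hypothesis K_meas : forall u, measurable_fun setT (fun x => K x u).
Hypothesis K_cond : forall (B : set T) (u : J), measurable B ->
  P (X @^-1` B `&` [set w | C w = u]) = (\int[P]_(w in X @^-1` B) (K (X w) u)%:E)%E.

Lemma ae_kernel_eq0 (u : J) :
  P [set w | C w = u] = 0 -> {ae P, forall w, K (X w) u = 0}.
Proof.
move=> Pu0.
have mKu : measurable_fun [set: Omega] (EFin \o (fun w => K (X w) u)).
  by apply/measurable_EFinP; apply: measurableT_comp (K_meas u) mX.
have : (\int[P]_(w in setT) `|(K (X w) u)%:E| = 0)%E.
  rewrite -Pu0 -[[set w | C w = u]]setTI -(preimage_setT X) K_cond //.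
  by apply: eq_integral => w _; rewrite gee0_abs // lee_fin.
move/(ae_eq_integral_abs P measurableT mKu).
by apply: filterS => w /(_ I) [].
Qed.

Lemma ae_kernel_supported (S : pred J) :
  (forall w, S (C w)) -> {ae P, forall w, forall u, ~~ S u -> K (X w) u = 0}.
Proof.
move=> SC; apply: filter_forall => u.
case: (boolP (S u)) => [_|nSu]; first exact: nearW.
have : P [set w | C w = u] = 0.
  by rewrite (_ : [set w | C w = u] = set0) ?measure0 //;
     apply/seteqP; split => w //= Cw; move: nSu; rewrite -Cw SC.
by move/ae_kernel_eq0; apply: filterS => w ->.
Qed.

End KernelSupport.

Theorem theorem1 (R : realType)
  (dO : measure_display) (Omega : measurableType dO) (P : probability Omega R)
  (dX : measure_display) (T : measurableType dX)
  (X : Omega -> T) (A M Y : Omega -> bool)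
  (Mp : bool -> Omega -> bool) (Yp : bool -> bool -> Omega -> bool)
  (K : T -> cfgT -> R) (eps : R)
  (mX : measurable_fun setT X)
  (mcfg : forall u : cfgT, measurable [set w | mkcfg A M Y Mp Yp w = u])
  (K_ge0 : forall x u, 0 <= K x u)
  (K_sum1 : forall x, \sum_(u : cfgT) K x u = 1)
  (K_meas : forall u, measurable_fun setT (fun x => K x u))
  (K_cond : forall (B : set T) (u : cfgT), measurable B ->
     P (X @^-1` B `&` [set w | mkcfg A M Y Mp Yp w = u]) =
     (\int[P]_(w in X @^-1` B) (K (X w) u)%:E)%E)
  (A1Y : forall w a m, A w = a -> M w = m -> Y w = Yp a m w)
  (A1M : forall w a, A w = a -> M w = Mp a w)
  (A2 : forall w, [/\ Yp true false w ==> Yp true true w,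
                      Yp false false w ==> Yp true false w,
                      Yp false true w ==> Yp true true w &
                      Mp false w ==> Mp true w])
  (A3 : {ae P, forall w, indep_A_pot (K (X w))})
  (A4 : {ae P, forall w, indep_Y_M (K (X w))})
  (eps_gt0 : 0 < eps)
  (A5 : {ae P, forall w, forall a m : bool,
          eps <= Kp (K (X w)) (fun u => (cA u == a) && (cM u == m))})
  (A6 : {ae P, forall w, eps <= mu (K (X w)) true true}) :
  {ae P, forall w,
     let k := K (X w) in
     [/\ psi k = (1 - mu k true false / mu k true true) *
                 (1 - gamma k false / gamma k true),
         delta k = (1 - mu k false false / mu k true true) *
                   (1 - gamma k false / gamma k true)
                   + (1 - mu k false true / mu k true true) *
                     (gamma k false / gamma k true) &
         zeta k = delta k - psi k]}.
Proof.
have K_admissible := ae_kernel_supported mX K_ge0 K_meas K_cond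
                       (mkcfg_admissible A1Y A1M A2).
near=> w => /=.
apply: causation_probabilities_identified.
- by near: w.
- by near: w.
- by near: w.
- by move=> a m; apply: lt_le_trans eps_gt0 _; move: a m; near: w.
- by apply: lt_le_trans eps_gt0 _; near: w.
Unshelve. all: by end_near.
Qed.
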